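(* Let $n\ge 3$ and $i\ge 0$. Then: (a) if $3\cdot 4^i\le n<6\cdot 4^i$, the set $\{2\cdot 4^j-1 : 0\le j\le i\}\cup\{3\cdot 4^i-1\}$, which has cardinality $i+2$, is a string attractor of $\mathbf{p}[0..n-1]$; (b) if $6\cdot 4^i\le n<12\cdot 4^i$, the set $\{4^j-1 : 0\le j\le i+1\}\cup\{6\cdot 4^i-1\}$, which has cardinality $i+3$, is a string attractor of $\mathbf{p}[0..n-1]$.
   Context: $\mathbf{p}=11010001\cdots$ is the infinite binary word, indexed from $0$, with $\mathbf{p}[n]=1$ if $n+1$ is a power of $2$ and $\mathbf{p}[n]=0$ otherwise (so $\mathbf{p}[0]=\mathbf{p}[1]=\mathbf{p}[3]=\mathbf{p}[7]=1$). A string attractor of a finite word $w=w[0..n-1]$ is a set $S\subseteq\{0,\ldots,n-1\}$ such that every nonempty factor $f$ of $w$ has an occurrence $w[p..q]=f$ with $p\le k\le q$ for some $k\in S$. *)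

From mathcomp Require Import all_boot.
Set Implicit Arguments. Unset Strict Implicit. Unset Printing Implicit Defensive.

Definition pword (m : nat) : bool := [exists k : 'I_(m.+2), m.+1 == 2 ^ k].

Definition factor (w : nat -> bool) (p q : nat) : seq bool :=
  [seq w k | k <- iota p (q - p).+1].

Definition string_attractor (w : nat -> bool) (n : nat) (S : seq nat) : Prop :=
  (forall k, k \in S -> k < n) /\
  forall p q, p <= q -> q < n ->
    exists p' q', [/\ p' <= q', q' < n, factor w p' q' = factor w p q &
                     exists2 k, k \in S & p' <= k <= q'].

(** The ones of [p] sit at the positions [2^k - 1].  Put [M = 2^e] with
    [3M <= n < 6M], and let [S] contain [3M - 1] and every [2^k - 1] with
    [k <= e + 1] and [k = e + 1 (mod 2)]; both sets of the theorem are of this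
    form ([e = 2i] in (a), [e = 2i + 1] in (b)).  Let [2^k - 1] be the last one
    at or before the end [q] of a factor [p[p..q]].  If the factor avoids it,
    it is a block of zeros shorter than the zero run [(2M - 1, min(4M - 1, n))]
    around [3M - 1].  Otherwise the factor either contains a point of [S]
    ([2^k - 1] itself, the previous one, or [3M - 1]), or [2^k - 1] is its only
    one and the factor can be slid so that this one lands on a neighbouring
    one [2^(k +- 1) - 1] in [S], the window meeting no other one. *)

From mathcomp Require Import all_boot zify.

Set Implicit Arguments.
Unset Strict Implicit.
Unset Printing Implicit Defensive.

Definition occurs_across (w : nat -> bool) (n : nat) (S : seq nat) (p q : nat) :=
  exists p' q', [/\ p' <= q', q' < n, factor w p' q' = factor w p q &
                    exists2 k, k \in S & p' <= k <= q'].

Lemma factor_shift (w : nat -> bool) p q p' :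
  (forall t, t <= q - p -> w (p' + t) = w (p + t)) ->
  factor w p' (p' + (q - p)) = factor w p q.
Proof.
move=> w_eq; have iotaE a l : iota a l = map (addn a) (iota 0 l).
  by rewrite -iotaDl addn0.
rewrite /factor addKn (iotaE p') (iotaE p) -!map_comp.
by apply/eq_in_map => t; rewrite mem_iota => /andP[_ lt_t]; apply: w_eq; lia.
Qed.

Lemma occurs_across_shift {w : nat -> bool} n S p q p1 k :
  p <= q -> p1 + (q - p) < n -> k \in S -> p1 <= k <= p1 + (q - p) ->
  (forall t, t <= q - p -> w (p1 + t) = w (p + t)) -> occurs_across w n S p q.
Proof.
move=> pq lt_n kS k_in w_eq; exists p1, (p1 + (q - p)); split=> //.
- by rewrite leq_addr.
- exact: factor_shift.
- by exists k.
Qed.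

Lemma occurs_across_self {w : nat -> bool} n S p q k :
  p <= q -> q < n -> k \in S -> p <= k <= q -> occurs_across w n S p q.
Proof. by move=> pq qn kS k_in; apply: (occurs_across_shift (p1 := p) _ _ kS); lia. Qed.

Lemma occurs_across_zeros {w : nat -> bool} n S p q a b k :
  p <= q -> (forall m, p <= m <= q -> ~~ w m) ->
  a <= k <= b -> b < n -> k \in S -> (forall m, a <= m <= b -> ~~ w m) ->
  q - p <= b - a -> occurs_across w n S p q.
Proof.
move=> pq w_pq k_ab bn kS w_ab short.
apply: (occurs_across_shift (p1 := maxn a (k - (q - p))) _ _ kS) => //; try lia.
move=> t le_t; rewrite (negbTE (w_pq (p + t) _)) ?(negbTE (w_ab _ _)) //; lia.
Qed.

Lemma occurs_across_single_one {w : nat -> bool} n S p q o o' :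
  p <= o <= q -> o - p <= o' -> o' + (q - o) < n -> o' \in S ->
  (forall m, p <= m <= q -> w m = (m == o)) ->
  (forall m, o' - (o - p) <= m <= o' + (q - o) -> w m = (m == o')) ->
  occurs_across w n S p q.
Proof.
move=> o_in le_o' lt_n o'S w_o w_o'.
apply: (occurs_across_shift (p1 := o' - (o - p)) _ _ o'S) => //; try lia.
by move=> t le_t; rewrite (w_o (p + t)) ?(w_o' (o' - (o - p) + t)); lia.
Qed.

Lemma pword_pow2_pred k : pword (2 ^ k - 1).
Proof.
apply/existsP; have k_lt : k < (2 ^ k - 1).+2 by have := @ltn_expl 2 k isT; lia.
have k_pos : 0 < 2 ^ k by rewrite expn_gt0.
by exists (Ordinal k_lt); apply/eqP => /=; lia.
Qed.

Lemma pword_gap k m : 2 ^ k - 1 < m < 2 ^ k.+1 - 1 -> ~~ pword m.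
Proof.
move=> m_gap; apply/existsP => -[[j _] /= /eqP m_eq].
have : 2 ^ k < 2 ^ j < 2 ^ k.+1 by lia.
by rewrite !ltn_exp2l //; lia.
Qed.

Lemma pword_between k m :
  2 ^ k - 1 < m < 2 ^ k.+2 - 1 -> pword m = (m == 2 ^ k.+1 - 1).
Proof.
move=> m_in; case: (ltngtP m (2 ^ k.+1 - 1)) => [lt_m | gt_m | ->].
- by apply/negbTE/(pword_gap (k := k)); lia.
- by apply/negbTE/(pword_gap (k := k.+1)); lia.
- exact: pword_pow2_pred.
Qed.

Lemma occurs_across_pword_one n S p q k k' :
  2 ^ k - 1 < p <= 2 ^ k.+1 - 1 -> 2 ^ k.+1 - 1 <= q < 2 ^ k.+2 - 1 ->
  2 ^ k.+1 - 1 - p < 2 ^ k' -> q - (2 ^ k.+1 - 1) < 2 ^ k'.+1 ->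
  2 ^ k'.+1 - 1 + (q - (2 ^ k.+1 - 1)) < n -> 2 ^ k'.+1 - 1 \in S ->
  occurs_across pword n S p q.
Proof.
move=> p_in q_in left_room right_room lt_n k'S.
have k'_pos : 0 < 2 ^ k' by rewrite expn_gt0.
have pow_k'S := expnS 2 k'; have pow_k'SS := expnS 2 k'.+1.
apply: (occurs_across_single_one _ _ lt_n k'S); try lia.
- by move=> m m_in; apply: pword_between; lia.
- by move=> m m_in; apply: pword_between; lia.
Qed.

Lemma pow2_cases e k :
  [\/ 2 ^ k <= 2 ^ e, 2 ^ k = 2 ^ e.+1, 2 ^ k = 2 ^ e.+2 | 2 ^ e.+3 <= 2 ^ k].
Proof.
have [le_ke | lt_ek] := leqP k e; first by apply: Or41; rewrite leq_pexp2l.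
have [->|[->|le]] : k = e.+1 \/ k = e.+2 \/ e.+3 <= k by lia.
- exact: Or42.
- exact: Or43.
- by apply: Or44; rewrite leq_pexp2l.
Qed.

Section PrefixAttractor.

Variables (e n : nat) (S : seq nat).
Hypothesis n_range : 3 * 2 ^ e <= n < 6 * 2 ^ e.
Hypothesis S_pow : forall k, k <= e.+1 -> odd k = odd e.+1 -> 2 ^ k - 1 \in S.
Hypothesis S_mid : 3 * 2 ^ e - 1 \in S.

Let pow2_e_facts :
  [/\ 0 < 2 ^ e, 2 ^ e.+1 = 2 * 2 ^ e, 2 ^ e.+2 = 4 * 2 ^ e & 2 ^ e.+3 = 8 * 2 ^ e].
Proof. by rewrite !expnS !mulnA expn_gt0. Qed.

Lemma occurs_across_no_one p q k :
  2 ^ k - 1 < p <= q -> q < 2 ^ k.+1 - 1 -> q < n -> occurs_across pword n S p q.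
Proof.
move=> p_in q_lt q_n; have [M_pos M2 M4 M8] := pow2_e_facts; have pow_kS := expnS 2 k.
apply: (occurs_across_zeros (a := 2 ^ e.+1) (b := minn (2 ^ e.+2 - 2) n.-1) _ _ _ _ S_mid).
- lia.
- by move=> m m_in; apply: (pword_gap (k := k)); lia.
- lia.
- lia.
- by move=> m m_in; apply: (pword_gap (k := e.+1)); lia.
- by case: (pow2_cases e k); lia.
Qed.

Lemma occurs_across_last_one_high p q k :
  e < k -> 2 ^ k - 1 \notin S ->
  p <= 2 ^ k - 1 <= q -> q < 2 ^ k.+1 - 1 -> q < n -> occurs_across pword n S p q.
Proof.
move=> lt_ek kNS one_in q_lt q_n; have [M_pos M2 M4 M8] := pow2_e_facts.
have k_eq : k = e.+2.
  have ne_k : k != e.+1 by apply: contraNneq kNS => ->; apply: S_pow.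
  have : 2 ^ k < 2 ^ e.+3 by lia.
  by rewrite ltn_exp2l //; lia.
subst k; have [p_le | p_gt] := leqP p (3 * 2 ^ e - 1).
  by apply: (occurs_across_self _ _ S_mid); lia.
by apply: (occurs_across_pword_one (k := e.+1) (k' := e)); try lia; apply: S_pow.
Qed.

Lemma occurs_across_last_one_low p q k :
  k <= e -> 2 ^ k - 1 \notin S ->
  p <= 2 ^ k - 1 <= q -> q < 2 ^ k.+1 - 1 -> occurs_across pword n S p q.
Proof.
move=> le_ke kNS one_in q_lt.
have odd_kS : odd k.+1 = odd e.+1.
  apply/eqP; move: kNS; apply: contraNT => /= odd_k; apply: S_pow; first lia.
  by move: odd_k => /=; case: (odd k); case: (odd e).
have kS : 2 ^ k.+1 - 1 \in S by apply: S_pow.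
have room : 2 ^ k.+1 + 2 ^ k <= n.
  by have := leq_pexp2l (isT : 0 < 2) le_ke; rewrite expnS; lia.
case: k => [|j] in le_ke kNS one_in q_lt odd_kS kS room *.
  have [-> ->] : p = 0 /\ q = 0 by lia.
  apply: (occurs_across_shift (p1 := 1) _ _ kS); try lia.
  by case=> // _; rewrite (pword_pow2_pred 1) (pword_pow2_pred 0).
have jS : 2 ^ j - 1 \in S by apply: S_pow; [lia | rewrite -odd_kS /= negbK].
have pow_jS := expnS 2 j; have pow_jSS := expnS 2 j.+1.
have [p_le | p_gt] := leqP p (2 ^ j - 1).
  by apply: (occurs_across_self _ _ jS); lia.
by apply: (occurs_across_pword_one (k := j) (k' := j.+1)) => //; lia.
Qed.

Lemma occurs_across_last_one p q k :
  p <= 2 ^ k - 1 <= q -> q < 2 ^ k.+1 - 1 -> q < n -> occurs_across pword n S p q.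
Proof.
move=> one_in q_lt q_n.
have [kS | kNS] := boolP (2 ^ k - 1 \in S); first by apply: (occurs_across_self _ _ kS); lia.
have [le_ke | lt_ek] := leqP k e.
- exact: occurs_across_last_one_low le_ke kNS one_in q_lt.
- exact: occurs_across_last_one_high lt_ek kNS one_in q_lt q_n.
Qed.

Lemma pword_prefix_attractor :
  (forall k, k \in S -> k < n) -> string_attractor pword n S.
Proof.
move=> S_lt; split=> // p q pq q_n.
have [k /andP[k_le k_gt]] : exists k, 2 ^ k <= q.+1 < 2 ^ k.+1.
  by exists (trunc_log 2 q.+1); rewrite trunc_logP ?trunc_log_ltn.
have [p_le | p_gt] := leqP p (2 ^ k - 1).
- by apply: (occurs_across_last_one (k := k)); lia.
- by apply: (occurs_across_no_one (k := k)); lia.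
Qed.

End PrefixAttractor.

Lemma expn2_half k : 2 ^ k = 2 ^ odd k * 4 ^ k./2.
Proof. by rewrite -{1}(odd_double_half k) expnD -mul2n expnM. Qed.

Lemma uniq_rcons_incr_pred (f : nat -> nat) m c :
  {homo f : x y / x < y} -> 0 < f 0 -> f m < c ->
  uniq (rcons [seq f j - 1 | j <- iota 0 m.+1] (c - 1)).
Proof.
move=> f_incr f0_pos fm_lt; have f_le := ltnW_homo f_incr.
have f_pos j : 0 < f j by apply: leq_trans f0_pos (f_le _ _ _).
rewrite rcons_uniq map_inj_in_uniq ?iota_uniq ?andbT.
- apply/mapP => -[j]; rewrite mem_iota => /andP[_ lt_j].
  have fj_le : f j <= f m by apply: f_le; rewrite -ltnS.
  by have := f_pos j; lia.
- move=> x y _ _ /= eq_xy; have := f_pos x; have := f_pos y.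
  by case: (ltngtP x y) => [/f_incr | /f_incr | //]; lia.
Qed.

Lemma mem_rcons_incr_pred (f : nat -> nat) m c k :
  {homo f : x y / x < y} -> f m < c ->
  k \in rcons [seq f j - 1 | j <- iota 0 m.+1] (c - 1) -> k <= c - 1.
Proof.
move=> f_incr fm_lt; rewrite mem_rcons inE => /predU1P[-> // | /mapP[j]].
rewrite mem_iota => /andP[_ lt_j] ->.
have fj_le : f j <= f m by apply: (ltnW_homo f_incr); rewrite -ltnS.
lia.
Qed.

Lemma pow2_ladder_attractor e n m (f : nat -> nat) :
  3 * 2 ^ e <= n < 6 * 2 ^ e -> {homo f : x y / x < y} -> 0 < f 0 ->
  f m < 3 * 2 ^ e ->
  (forall k, k <= e.+1 -> odd k = odd e.+1 -> exists2 j, j <= m & 2 ^ k = f j) ->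
  let S := rcons [seq f j - 1 | j <- iota 0 m.+1] (3 * 2 ^ e - 1) in
  size (undup S) = m.+2 /\ string_attractor pword n S.
Proof.
move=> n_range f_incr f0_pos fm_lt ladder S.
split; first by rewrite undup_id ?uniq_rcons_incr_pred // size_rcons size_map size_iota.
apply: (pword_prefix_attractor n_range).
- move=> k k_le odd_k; have [j j_le ->] := ladder k k_le odd_k.
  rewrite mem_rcons inE; apply/orP; right; apply/mapP.
  by exists j => //; rewrite mem_iota; lia.
- by rewrite mem_rcons mem_head.
- by move=> k /(mem_rcons_incr_pred f_incr fm_lt); lia.
Qed.

Theorem theorem8 (n i : nat) : 3 <= n ->
  ((3 * 4 ^ i <= n < 6 * 4 ^ i ->
    let S := rcons [seq 2 * 4 ^ j - 1 | j <- iota 0 i.+1] (3 * 4 ^ i - 1) in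
    size (undup S) = i + 2 /\ string_attractor pword n S) /\
   (6 * 4 ^ i <= n < 12 * 4 ^ i ->
    let S := rcons [seq 4 ^ j - 1 | j <- iota 0 i.+2] (6 * 4 ^ i - 1) in
    size (undup S) = i + 3 /\ string_attractor pword n S)).
Proof.
have pow4_gt0 : 0 < 4 ^ i by rewrite expn_gt0.
move=> _; split=> n_range.
- have lowE : 3 * 4 ^ i = 3 * 2 ^ (2 * i) by rewrite expnM.
  have highE : 6 * 4 ^ i = 6 * 2 ^ (2 * i) by rewrite expnM.
  rewrite addn2 lowE; rewrite lowE highE in n_range.
  apply: (pow2_ladder_attractor (f := fun j => 2 * 4 ^ j)) => //.
  + by move=> x y; rewrite ltn_pmul2l // ltn_exp2l.
  + by rewrite -lowE ltn_pmul2r.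
  + move=> k k_le odd_k; exists k./2; first lia.
    by rewrite expn2_half odd_k /= oddM.
- have lowE : 6 * 4 ^ i = 3 * 2 ^ (2 * i).+1 by rewrite expnS expnM mulnA.
  have highE : 12 * 4 ^ i = 6 * 2 ^ (2 * i).+1 by rewrite expnS expnM mulnA.
  rewrite addn3 lowE; rewrite lowE highE in n_range.
  apply: (pow2_ladder_attractor (f := expn 4)) => //.
  + by move=> x y; rewrite ltn_exp2l.
  + by rewrite -lowE expnS ltn_pmul2r.
  + move=> k k_le odd_k; exists k./2; first lia.
    by rewrite expn2_half odd_k /= oddM mul1n.
Qed.
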